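(* Let $S=[S_1,\ldots,S_m]$ be a sequence of formulas and $I,J$ models. Then $I \equiv_{\emptyset S} J$ holds if and only if $I \equiv_{\emptyset Q} J$ holds for every formula $Q=(B_1\equiv S_1)\wedge\cdots\wedge(B_m\equiv S_m)$ with each $B_i\in\{\mathsf{true},\mathsf{false}\}$.
   Context: Propositional models are truth assignments over a finite set of variables; a formula used where a set of models is expected stands for its set of models. A doxastic state is a sequence $C=[C(0),\ldots,C(m)]$ of nonempty, pairwise disjoint sets of models covering all models; $I\le_C J$ iff $I\in C(i)$, $J\in C(j)$ with $i\le j$; $I\equiv_C J$ iff $I\le_C J$ and $J\le_C I$. The flat doxastic state $\emptyset$ is $[\text{all models}]$. Lexicographic revision: $C\,\mathrm{lex}(A) = [C(0)\cap A,\ldots,C(m)\cap A, C(0)\setminus A,\ldots,C(m)\setminus A]$, empty sets discarded. For a sequence of formulas $S=[S_1,\ldots,S_m]$, $\emptyset S$ denotes $\emptyset$ revised lexicographically by $S_1$, then $S_2$, ..., then $S_m$ ($\emptyset[\,]=\emptyset$); for a formula $Q$, $\emptyset Q$ denotes $\emptyset[Q]$. *)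

From mathcomp Require Import all_boot.
Set Implicit Arguments. Unset Strict Implicit. Unset Printing Implicit Defensive.

Definition model (n : nat) := {ffun 'I_n -> bool}.

Inductive formula (n : nat) : Type :=
| FVar of 'I_n
| FTrue
| FFalse
| FNot of formula n
| FAnd of formula n & formula n
| FOr of formula n & formula n
| FImp of formula n & formula n
| FIff of formula n & formula n.
Arguments FTrue {n}. Arguments FFalse {n}.

Fixpoint holds n (I : model n) (F : formula n) : bool :=
  match F with
  | FVar i => I i
  | FTrue => true
  | FFalse => false
  | FNot G => ~~ holds I G
  | FAnd G H => holds I G && holds I H
  | FOr G H => holds I G || holds I H
  | FImp G H => holds I G ==> holds I H
  | FIff G H => holds I G == holds I H
  end.

Definition mods n (F : formula n) : {set model n} := [set I | holds I F].

(* Doxastic states: sequences of sets of models (partition in order). *)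
Definition doxstate n := seq {set model n}.

Definition dle n (C : doxstate n) (I J : model n) : Prop :=
  exists i j, i <= j /\ I \in nth set0 C i /\ J \in nth set0 C j.

Definition dequiv n (C : doxstate n) (I J : model n) : Prop :=
  dle C I J /\ dle C J I.

Definition flat n : doxstate n := [:: [set: model n]].

Definition lex n (C : doxstate n) (A : formula n) : doxstate n :=
  [seq X <- [seq c :&: mods A | c <- C] ++ [seq c :\: mods A | c <- C]
     | X != set0].

(* emptyset S : flat state revised by S_1, then S_2, ..., then S_m. *)
Definition revseq n (S : seq (formula n)) : doxstate n := foldl (@lex n) (flat n) S.

(* Q = (B_1 == S_1) /\ ... /\ (B_m == S_m), with B_i in {true,false};
   the empty conjunction is true. *)
Definition bconst n (b : bool) : formula n := if b then FTrue else FFalse.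

Fixpoint signQ n (B : seq bool) (S : seq (formula n)) : formula n :=
  match B, S with
  | [:: b], [:: s] => FIff (bconst n b) s
  | b :: B', s :: S' => FAnd (FIff (bconst n b) s) (signQ B' S')
  | _, _ => FTrue
  end.

From mathcomp Require Import all_boot.
Set Implicit Arguments. Unset Strict Implicit. Unset Printing Implicit Defensive.

(* Revising lexicographically by A splits every class X of C into the models
   of X satisfying A and those falsifying it, so by induction the classes of
   the state obtained from the flat one by S_1, ..., S_m are exactly the
   nonempty sets of models sharing the same truth values on S_1, ..., S_m
   (their signature). Hence I and J are equivalent there iff they have the
   same signature. The formula Q built from B holds exactly at the models of
   signature B, so I and J are equivalent in the state revised by Q iff both
   or neither have signature B; choosing for B the signature of I gives the
   converse. *)

Definition fibre_partition n (T : eqType) (C : doxstate n) (f : model n -> T) :=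
  [/\ uniq C, forall I, exists2 X, X \in C & I \in X
    & forall X Y I J, X \in C -> Y \in C -> I \in X -> J \in Y ->
        (X == Y) = (f I == f J)].

Definition level n (C : doxstate n) (I : model n) := find (fun X : {set model n} => I \in X) C.

Section Levels.

Variables (n : nat) (T : eqType) (C : doxstate n) (f : model n -> T).
Hypothesis fibC : fibre_partition C f.

Lemma level_lt_size I : level C I < size C.
Proof.
have [_ cover _] := fibC; have [X XC IX] := cover I.
by rewrite -has_find; apply/hasP; exists X.
Qed.

Lemma mem_nth_level I : I \in nth set0 C (level C I).
Proof. by apply: (nth_find set0 (a := fun X => I \in X)); rewrite has_find level_lt_size. Qed.

Lemma level_nth i I : I \in nth set0 C i -> level C I = i.
Proof.
have [uC _ sameC] := fibC => Ii.
have ltiC : i < size C.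
  by apply: contraLR Ii; rewrite -leqNgt => /(nth_default set0) ->; rewrite inE.
apply/eqP; rewrite -(nth_uniq set0 (level_lt_size I) ltiC uC).
by rewrite (sameC _ _ I I) ?mem_nth ?level_lt_size ?mem_nth_level.
Qed.

Lemma eq_level I J : (level C I == level C J) = (f I == f J).
Proof.
have [uC _ sameC] := fibC.
rewrite -(nth_uniq set0 (level_lt_size I) (level_lt_size J) uC).
by rewrite (sameC _ _ I J) ?mem_nth ?level_lt_size ?mem_nth_level.
Qed.

Lemma dle_level I J : dle C I J <-> level C I <= level C J.
Proof.
split=> [[i [j [leij [Ii Jj]]]] | leIJ]; first by rewrite (level_nth Ii) (level_nth Jj).
by exists (level C I), (level C J); rewrite leIJ !mem_nth_level.
Qed.

Lemma dequiv_fibre_partition I J : dequiv C I J <-> f I = f J.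
Proof.
split=> [[/dle_level le_IJ /dle_level le_JI] | eq_fIJ].
  by apply/eqP; rewrite -eq_level eqn_leq le_IJ le_JI.
have /eqP eq_lvl : level C I == level C J by rewrite eq_level eq_fIJ.
by split; apply/dle_level; rewrite eq_lvl.
Qed.

End Levels.

Lemma fibre_partition_flat n (T : eqType) (x : T) :
  fibre_partition (flat n) (fun=> x).
Proof.
split=> // [I | X Y I J]; first by exists setT; rewrite ?inE.
by rewrite !inE => /eqP -> /eqP ->; rewrite !eqxx.
Qed.

Definition cut n (A : formula n) (b : bool) (X : {set model n}) :=
  [set I in X | holds I A == b].

Lemma lex_cut n (C : doxstate n) A :
  lex C A = [seq Y <- [seq cut A b X | b <- [:: true; false], X <- C] | Y != set0].
Proof.
rewrite /lex /= cats0; congr (filter _ (_ ++ _)); apply: eq_map => X;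
  by apply/setP => I; rewrite !inE ?eqbF_neg ?eqb_id andbC.
Qed.

Lemma mem_lex n (C : doxstate n) A Y :
  Y \in lex C A -> exists2 p : bool * {set model n}, p.2 \in C & Y = cut A p.1 p.2.
Proof. by rewrite lex_cut mem_filter => /andP [_ /allpairsP [p [_ XC ->]]]; exists p. Qed.

Section Lex.

Variables (n : nat) (T T' : eqType) (C : doxstate n) (f : model n -> T).
Variables (A : formula n) (g : model n -> T').
Hypothesis fibC : fibre_partition C f.
Hypothesis eq_g : forall I J, (g I == g J) = (f I == f J) && (holds I A == holds J A).

Lemma eq_cut X Y b c K :
  X \in C -> Y \in C -> K \in cut A b X -> (cut A b X == cut A c Y) = (X == Y) && (b == c).
Proof.
have [_ _ sameC] := fibC => XC YC KX.
apply/eqP/andP => [eXY | [/eqP <- /eqP <-] //].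
move: (KX); rewrite eXY !inE => /andP [KY /eqP <-].
by rewrite inE in KX; case/andP: KX => KX /eqP ->; rewrite (sameC X Y K K).
Qed.

Lemma uniq_lex : uniq (lex C A).
Proof.
have [uC _ _] := fibC.
pose cuts := [seq (b, X) | b <- [:: true; false], X <- C].
have in_cuts b X : (b, X) \in cuts -> X \in C by case/allpairsP => -[? ?] [_ ? [_ ->]].
rewrite lex_cut.
have -> : [seq cut A b X | b <- [:: true; false], X <- C] = [seq cut A p.1 p.2 | p <- cuts].
  by rewrite map_allpairs.
rewrite filter_map map_inj_in_uniq ?filter_uniq ?allpairs_uniq //; first by case=> ? ? [].
move=> [b X] [c Y]; rewrite !mem_filter /=.
move=> /andP [/set0Pn [K KX] /in_cuts XC] /andP [_ /in_cuts YC] /eqP.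
by rewrite (eq_cut _ XC YC KX) => /andP [/eqP -> /eqP ->].
Qed.

Lemma fibre_partition_lex : fibre_partition (lex C A) g.
Proof.
have [_ cover sameC] := fibC; split; first exact: uniq_lex.
- move=> I; have [X XC IX] := cover I.
  have IcX : I \in cut A (holds I A) X by rewrite inE IX eqxx.
  exists (cut A (holds I A) X) => //; rewrite lex_cut mem_filter.
  apply/andP; split; first by apply/set0Pn; exists I.
  by apply/allpairsP; exists (holds I A, X); rewrite XC; case: (holds I A).
move=> _ _ I J /mem_lex [[b X] /= XC ->] /mem_lex [[c Y] /= YC ->] IX JY.
rewrite (eq_cut _ XC YC IX) eq_g.
move: IX JY; rewrite !inE => /andP [IX /eqP ->] /andP [JY /eqP ->].
by rewrite (sameC X Y I J).
Qed.

End Lex.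

Definition signature n (S : seq (formula n)) (I : model n) := [seq holds I s | s <- S].

Lemma fibre_partition_revseq n (S : seq (formula n)) : fibre_partition (revseq S) (signature S).
Proof.
elim/last_ind: S => [|S A IH]; first exact: fibre_partition_flat.
rewrite /revseq foldl_rcons; apply: fibre_partition_lex IH _ => I J.
by rewrite /signature !map_rcons eqseq_rcons.
Qed.

Lemma dequiv_revseq n (S : seq (formula n)) I J :
  dequiv (revseq S) I J <-> signature S I = signature S J.
Proof. exact/dequiv_fibre_partition/fibre_partition_revseq. Qed.

Lemma holds_signQ n (B : seq bool) (S : seq (formula n)) I :
  size B = size S -> holds I (signQ B S) = (B == signature S I).
Proof.
have holds_bconst b : holds I (bconst n b) = b by case: b.
elim: B S => [|b B IH] [|s S] //= [eqBS].
rewrite eqseq_cons -IH //.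
by case: B S {IH} eqBS => [|? ?] [|? ?] //= _; rewrite holds_bconst ?andbT.
Qed.

Theorem mainTheorem5 (n : nat) (S : seq (formula n)) (I J : model n) :
  dequiv (revseq S) I J <->
  (forall B : seq bool, size B = size S ->
     dequiv (revseq [:: signQ B S]) I J).
Proof.
split=> [/dequiv_revseq eqIJ B szB | signQ_IJ].
  by apply/dequiv_revseq; rewrite /signature /= !holds_signQ // eqIJ.
apply/dequiv_revseq.
have szI : size (signature S I) = size S by rewrite size_map.
move/dequiv_revseq: (signQ_IJ _ szI); rewrite /signature /= !holds_signQ //.
by rewrite eqxx => -[/esym/eqP].
Qed.
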